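(* If $X$ is a discrete topological space, then $\mathrm{MG}(X)$ consists exactly of the cardinal $1$ together with all regular cardinals.
   Context: A linearly ordered Abelian group is an Abelian group with a linear order compatible with addition. For $x,y\in G_{>0}$, $x\asymp y$ iff $y\le nx$ and $x\le my$ for some $n,m\in\mathbb{Z}_{\ge1}$; $\mathrm{Arc}(G)=G_{>0}/\asymp$, ordered by $[x]\preceq[y]$ iff ($nx<y$ for all $n$) or $x\asymp y$; $\mathrm{Arc}(G)^\perp$ is $\mathrm{Arc}(G)$ with a new least element adjoined. For a bottomed linearly ordered set $S$ (least element $\perp_S$, $S^*=S\setminus\{\perp_S\}$), $\chi(S)$ is the least cardinal $\kappa>0$ such that some strictly decreasing family $(s_\alpha)_{\alpha<\kappa}$ in $S^*$ has every $t\in S^*$ bounded below by some $s_\alpha$. A $G$-metric on $X$: $d\colon X^2\to G$ with $d(x,y)=0\iff x=y$, $d\ge0$, symmetric, triangle inequality; $\mathrm{Met}(X;G)$ is the set of $G$-metrics generating the topology of $X$ via open balls of radii in $G_{>0}$. $\kappa\in\mathrm{MG}(X)$ iff some linearly ordered Abelian group $G$ with $\chi(\mathrm{Arc}(G)^\perp)=\kappa$ has $\mathrm{Met}(X;G)\ne\emptyset$. *)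

From HB Require Import structures.
From mathcomp Require Import all_boot all_order all_algebra.
From mathcomp Require Import all_classical all_reals topology.
Set Implicit Arguments.
Unset Strict Implicit.
Unset Printing Implicit Defensive.

Definition is_wellorder (I : Type) (lt : I -> I -> Prop) : Prop :=
  (forall a, ~ lt a a) /\
  (forall a b c, lt a b -> lt b c -> lt a c) /\
  (forall a b, lt a b \/ a = b \/ lt b a) /\
  well_founded lt.

Definition card_le (I J : Type) : Prop := exists f : I -> J, injective f.

(* (I, lt) is a cardinal: an initial ordinal, i.e. a well-order not
   injectable into any of its proper initial segments *)
Definition is_cardinal (I : Type) (lt : I -> I -> Prop) : Prop :=
  is_wellorder lt /\ forall x : I, ~ card_le I {y : I | lt y x}.

Definition card_is_one (I : Type) : Prop := exists x : I, forall y : I, y = x.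

Definition is_regular (I : Type) (lt : I -> I -> Prop) : Prop :=
  is_cardinal lt /\
  (exists f : nat -> I, injective f) /\
  forall A : I -> Prop,
    (forall a : I, exists2 b : I, A b & ~ lt b a) ->
    card_le I {x : I | A x}.

Definition is_bottomed_lo (S : Type) (le : S -> S -> Prop) (bot : S) : Prop :=
  (forall a, le a a) /\
  (forall a b, le a b -> le b a -> a = b) /\
  (forall a b c, le a b -> le b c -> le a c) /\
  (forall a b, le a b \/ le b a) /\
  (forall a, le bot a).

Definition coinitial_family (S : Type) (le : S -> S -> Prop) (bot : S)
    (I : Type) (ltI : I -> I -> Prop) : Prop :=
  exists s : I -> S,
    (forall a, s a <> bot) /\
    (forall a b, ltI a b -> le (s b) (s a) /\ s b <> s a) /\
    (forall t, t <> bot -> exists a, le (s a) t).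

Definition chi_is (S : Type) (le : S -> S -> Prop) (bot : S)
    (I : Type) (ltI : I -> I -> Prop) : Prop :=
  is_cardinal ltI /\ inhabited I /\ coinitial_family le bot ltI /\
  forall (J : Type) (ltJ : J -> J -> Prop),
    is_cardinal ltJ -> inhabited J -> coinitial_family le bot ltJ ->
    card_le I J.

Definition is_loag (G : Type) (z : G) (add : G -> G -> G) (opp : G -> G)
    (le : G -> G -> Prop) : Prop :=
  (forall x y w, add x (add y w) = add (add x y) w) /\
  (forall x y, add x y = add y x) /\
  (forall x, add z x = x) /\
  (forall x, add (opp x) x = z) /\
  (forall x, le x x) /\
  (forall x y, le x y -> le y x -> x = y) /\
  (forall x y w, le x y -> le y w -> le x w) /\
  (forall x y, le x y \/ le y x) /\
  (forall x y w, le x y -> le (add x w) (add y w)).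

Section LOAG.
Variables (G : Type) (z : G) (add : G -> G -> G) (le : G -> G -> Prop).

Definition glt (x y : G) : Prop := le x y /\ x <> y.
Definition gpos (x : G) : Prop := glt z x.

Fixpoint nmul (n : nat) (x : G) : G :=
  match n with O => z | S m => add x (nmul m x) end.

Definition asymp (x y : G) : Prop :=
  exists n m : nat, (1 <= n)%N /\ (1 <= m)%N /\ le y (nmul n x) /\ le x (nmul m y).

(* Arc(G) = G_{>0} / asymp, its elements are the equivalence classes *)
Definition Arc : Type :=
  {A : G -> Prop | exists x, gpos x /\ A = (fun y => gpos y /\ asymp x y)}.

Definition arc_le (a b : Arc) : Prop :=
  exists x y, proj1_sig a x /\ proj1_sig b y /\
    ((forall n : nat, glt (nmul n x) y) \/ asymp x y).

Definition ArcPerp : Type := option Arc.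
Definition arcperp_le (a b : ArcPerp) : Prop :=
  match a, b with
  | None, _ => True
  | Some _, None => False
  | Some a', Some b' => arc_le a' b'
  end.
End LOAG.

Definition is_Gmetric (X G : Type) (z : G) (add : G -> G -> G)
    (le : G -> G -> Prop) (d : X -> X -> G) : Prop :=
  (forall x y, d x y = z <-> x = y) /\
  (forall x y, le z (d x y)) /\
  (forall x y, d x y = d y x) /\
  (forall x y w, le (d x w) (add (d x y) (d y w))).

Definition in_Met (X : topologicalType) (G : Type) (z : G)
    (add : G -> G -> G) (le : G -> G -> Prop) (d : X -> X -> G) : Prop :=
  is_Gmetric z add le d /\
  forall U : set X, open U <->
    (forall x, U x -> exists r, gpos z le r /\
        (forall y, glt le (d x y) r -> U y)).

Definition in_MG (X : topologicalType) (I : Type) (ltI : I -> I -> Prop) : Prop :=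
  exists (G : Type) (z : G) (add : G -> G -> G) (opp : G -> G)
         (le : G -> G -> Prop),
    is_loag z add opp le /\
    chi_is (@arcperp_le G z add le) None ltI /\
    exists d : X -> X -> G, in_Met z add le d.

From Pilot Require Import Defs.
From mathcomp Require Import all_boot all_order all_algebra.
From mathcomp Require Import all_classical all_reals topology.
From Stdlib Require Import Wellfounded.Inverse_Image.
(* [Defs.card_le] must shadow [cardinality.card_le]. *)
Import Defs.
Import Order.TTheory GRing.Theory Num.Theory.
Set Implicit Arguments.
Unset Strict Implicit.
Unset Printing Implicit Defensive.

(* Let kappa index a strictly decreasing coinitial family (s_a) of a linear
   order.  If kappa has a largest element M, then s_M alone is coinitial, so
   kappa = 1 by minimality.  Otherwise kappa is infinite, and every cofinal
   A in kappa still indexes a coinitial family.  Along any injection into a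
   well-order, the records of a coinitial family (the terms below all earlier
   ones) form a strictly decreasing coinitial family; either their index set
   is a cardinal, or it injects into a shorter initial segment of kappa and
   we recurse.  So some cardinal of size at most |A| carries such a family,
   and kappa <= |A|: kappa is regular.

   Conversely take G = Z^kappa, ordered lexicographically.  The archimedean
   class of a positive element is determined by its leading index, with
   larger indices giving smaller classes; hence the unit vectors form a
   strictly decreasing coinitial family of Arc(G), and the leading indices of
   any coinitial family are cofinal in kappa, so have size kappa when kappa
   is 1 or regular.  Any set carries the G-metric with constant distance a
   fixed positive element, and it generates the discrete topology. *)

Lemma proj1_sig_inj (T : Type) (P : T -> Prop) : injective (@proj1_sig T P).
Proof. exact: eq_sig_hprop (fun _ _ _ => Prop_irrelevance _ _). Qed.

Lemma card_le_trans (A B C : Type) : card_le A B -> card_le B C -> card_le A C.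
Proof. by case=> f finj [g ginj]; exists (g \o f) => x y /ginj /finj. Qed.

Definition cofinal (I : Type) (ltI : I -> I -> Prop) (A : I -> Prop) : Prop :=
  forall a, exists2 b, A b & ~ ltI b a.

Definition full_cofinality (I : Type) (ltI : I -> I -> Prop) : Prop :=
  forall A, cofinal ltI A -> card_le I {x | A x}.

Section WellOrder.
Variables (I : Type) (ltI : I -> I -> Prop).
Hypothesis hW : is_wellorder ltI.

Lemma wo_irrefl a : ~ ltI a a.
Proof. by case: hW. Qed.

Lemma wo_trans a b c : ltI a b -> ltI b c -> ltI a c.
Proof. by case: hW => _ [htr _]; apply: htr. Qed.

Lemma wo_trichotomy a b : ltI a b \/ a = b \/ ltI b a.
Proof. by case: hW => _ [_ [htri _]]. Qed.

Lemma wo_wf : well_founded ltI.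
Proof. by case: hW => _ [_ [_ hwf]]. Qed.

Lemma wo_least (Y : I -> Prop) y :
  Y y -> exists2 y0, Y y0 & forall y', ltI y' y0 -> ~ Y y'.
Proof.
elim/(well_founded_ind wo_wf): y => y IH Yy.
have [[y' lt Yy']|none] := EM (exists2 y', ltI y' y & Y y'); first exact: IH lt Yy'.
by exists y => // y' lt Yy'; apply: none; exists y'.
Qed.

Definition induced_lt (K : Type) (e : K -> I) (a b : K) : Prop := ltI (e a) (e b).

Lemma induced_wellorder (K : Type) (e : K -> I) :
  injective e -> is_wellorder (induced_lt e).
Proof.
rewrite /induced_lt => einj; split; [|split; [|split]].
- by move=> a; apply: wo_irrefl.
- by move=> a b c; apply: wo_trans.
- by move=> a b; case: (wo_trichotomy (e a) (e b)) => [|[/einj|]]; auto.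
- exact: wf_inverse_image wo_wf.
Qed.

Lemma wo_nomax_nat_inj (i0 : I) :
  (forall a, exists b, ltI a b) -> exists f : nat -> I, injective f.
Proof.
move=> /choice [next ltnext]; exists (fun n => iter n next i0).
have incr n m : (n < m)%N -> ltI (iter n next i0) (iter m next i0).
  elim: m => // m IHm; rewrite ltnS leq_eqVlt => /orP[/eqP-> //|lt].
  exact: wo_trans (IHm lt) (ltnext _).
move=> n m e; case: (ltngtP n m) => // /incr; rewrite e => /wo_irrefl [].
Qed.

End WellOrder.

Section Coinitiality.
Variables (S : Type) (le : S -> S -> Prop) (bot : S).
Hypothesis leS_trans : forall a b c, le a b -> le b c -> le a c.
Hypothesis leS_total : forall a b, le a b \/ le b a.
Variables (I : Type) (ltI : I -> I -> Prop).
Hypothesis hW : is_wellorder ltI.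

Definition coinitial_map (K : Type) (f : K -> S) : Prop :=
  (forall k, f k <> bot) /\ forall t, t <> bot -> exists k, le (f k) t.

Definition small_coinitial_cardinal (K : Type) : Prop :=
  exists (J : Type) (ltJ : J -> J -> Prop),
    [/\ is_cardinal ltJ, coinitial_family le bot ltJ & card_le J K].

Lemma small_coinitial_cardinal_card_le (K K' : Type) :
  small_coinitial_cardinal K' -> card_le K' K -> small_coinitial_cardinal K.
Proof.
case=> J [ltJ [cJ famJ JK']] K'K; exists J, ltJ; split => //.
exact: card_le_trans JK' K'K.
Qed.

(* [R] selects the records of [f]: the indices whose value is strictly below
   the values at all smaller indices. *)
Lemma coinitial_records (K : Type) (e : K -> I) (f : K -> S) :
  injective e -> coinitial_map f ->
  exists R : K -> Prop,
    coinitial_family le bot (induced_lt ltI (fun r : {k | R k} => e (proj1_sig r))).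
Proof.
move=> einj [f_nbot f_coin].
exists (fun k => forall k', ltI (e k') (e k) -> le (f k) (f k') /\ f k <> f k').
exists (fun r => f (proj1_sig r)); split=> [r|]; first exact: f_nbot.
split=> [a b ab|]; first exact: (proj2_sig b) _ ab.
move=> t /f_coin [k fkt].
pose Y y := exists2 k, e k = y & le (f k) t.
have [_ [k0 <- fk0t] minY] := wo_least hW (Y := Y) (ex_intro2 _ _ k erefl fkt).
have Rk0 k' : ltI (e k') (e k0) -> le (f k0) (f k') /\ f k0 <> f k'.
  move=> lt; have fk't : ~ le (f k') t by move=> h; apply: (minY _ lt); exists k'.
  case: (leS_total (f k0) (f k')) => [le0|le1].
  - by split=> // e0; apply: fk't; rewrite -e0.
  - by case: fk't; apply: leS_trans le1 fk0t.
by exists (exist _ k0 Rk0).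
Qed.

Lemma coinitial_cardinal_or_segment (K : Type) (e : K -> I) (f : K -> S) :
  injective e -> coinitial_map f ->
  small_coinitial_cardinal K \/
  exists (K' : Type) (f' : K' -> S) (k0 : K),
    [/\ coinitial_map f', card_le K' K & card_le K' {y | ltI y (e k0)}].
Proof.
move=> einj fcoin; have [R [s [s_nbot [s_dec s_coin]]]] := coinitial_records einj fcoin.
pose eR (r : {k | R k}) := e (proj1_sig r).
have eR_inj : injective eR by move=> a b /einj /proj1_sig_inj.
have RK : card_le {k | R k} K by exists (@proj1_sig _ _); apply: proj1_sig_inj.
have [[r0 [g ginj]]|noseg] :=
  EM (exists r0, card_le {k | R k} {r | induced_lt ltI eR r r0}).
- right; exists {k | R k}, s, (proj1_sig r0); split.
  + by split.
  + exact: RK.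
  + exists (fun r => exist (fun y => ltI y (eR r0)) (eR (proj1_sig (g r))) (proj2_sig (g r))).
    by move=> a b [/eR_inj /proj1_sig_inj /ginj].
- left; exists {k | R k}, (induced_lt ltI eR); split.
  + split; first exact: induced_wellorder.
    by move=> r hr; apply: noseg; exists r.
  + by exists s.
  + exact: RK.
Qed.

Lemma small_coinitial_cardinal_segment x (K : Type) (f : K -> S) :
  coinitial_map f -> card_le K {y | ltI y x} -> small_coinitial_cardinal K.
Proof.
elim/(well_founded_ind (wo_wf hW)): x K f => x IH K f fcoin [j jinj].
have einj : injective (fun k => proj1_sig (j k)) by move=> a b /proj1_sig_inj /jinj.
have [//|[K' [f' [k0 [f'coin K'K K'seg]]]]] := coinitial_cardinal_or_segment einj fcoin.
exact: small_coinitial_cardinal_card_le (IH _ (proj2_sig (j k0)) K' f' f'coin K'seg) K'K.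
Qed.

Lemma small_coinitial_cardinal_inj (K : Type) (e : K -> I) (f : K -> S) :
  injective e -> coinitial_map f -> small_coinitial_cardinal K.
Proof.
move=> einj fcoin.
have [//|[K' [f' [k0 [f'coin K'K K'seg]]]]] := coinitial_cardinal_or_segment einj fcoin.
exact: small_coinitial_cardinal_card_le (small_coinitial_cardinal_segment f'coin K'seg) K'K.
Qed.

Lemma unit_cardinal : is_cardinal (fun _ _ : unit => False).
Proof.
split; last by move=> x [g _]; case: (g tt).
split; first by move=> ?.
split; first by move=> ? ? ?.
by split=> [[] []|[]]; [right; left|constructor=> ? []].
Qed.

Lemma coinitial_family_inhabited (J : Type) (ltJ : J -> J -> Prop) t :
  coinitial_family le bot ltJ -> t <> bot -> inhabited J.
Proof. by move=> [s [_ [_ s_coin]]] /s_coin [j _]; constructor. Qed.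

Lemma chi_card_one_of_max :
  chi_is le bot ltI -> (exists M, forall a, ~ ltI M a) -> card_is_one I.
Proof.
move=> [_ [[i0] [[s [s_nbot [s_dec s_coin]]] chi_min]]] [M maxM].
have [g ginj] : card_le I unit.
  apply: chi_min unit_cardinal (inhabits tt) _.
  exists (fun _ => s M); split=> //; split=> // t /s_coin [a sat]; exists tt.
  case: (wo_trichotomy hW a M) => [lt|[<- //|/maxM //]].
  exact: leS_trans (s_dec _ _ lt).1 sat.
by exists i0 => y; apply: ginj; case: (g y); case: (g i0).
Qed.

Lemma chi_regular_of_nomax :
  chi_is le bot ltI -> (forall M, exists a, ltI M a) -> is_regular ltI.
Proof.
move=> [cI [[i0] [[s [s_nbot [s_dec s_coin]]] chi_min]]] nomax.
split=> //; split; first exact: wo_nomax_nat_inj hW i0 nomax.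
move=> A Acof.
have Acoin : coinitial_map (fun a : {x | A x} => s (proj1_sig a)).
  split=> [a|t /s_coin [a sat]]; first exact: s_nbot.
  have [b Ab nba] := Acof a; exists (exist _ b Ab) => /=.
  case: (wo_trichotomy hW a b) => [lt|[<- //|//]].
  exact: leS_trans (s_dec _ _ lt).1 sat.
have [J [ltJ [cJ famJ JA]]] :=
  small_coinitial_cardinal_inj (@proj1_sig_inj _ A) Acoin.
have inhJ := coinitial_family_inhabited famJ (s_nbot i0).
exact: card_le_trans (chi_min J ltJ cJ inhJ famJ) JA.
Qed.

Lemma chi_card_one_or_regular :
  chi_is le bot ltI -> card_is_one I \/ is_regular ltI.
Proof.
move=> chiI; have [[M maxM]|nomax] := EM (exists M, forall a, ~ ltI M a).
  by left; apply: chi_card_one_of_max => //; exists M.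
right; apply: chi_regular_of_nomax => // M.
by apply/not_existsP => noa; apply: nomax; exists M.
Qed.

End Coinitiality.

Section LinearlyOrderedGroup.
Variables (G : Type) (z : G) (add : G -> G -> G) (opp : G -> G) (le : G -> G -> Prop).
Hypothesis hG : is_loag z add opp le.

Lemma loag_addA x y w : add x (add y w) = add (add x y) w.
Proof. by have [h _] := hG; apply: h. Qed.

Lemma loag_addC x y : add x y = add y x.
Proof. by have [_ [h _]] := hG; apply: h. Qed.

Lemma loag_add0 x : add z x = x.
Proof. by have [_ [_ [h _]]] := hG; apply: h. Qed.

Lemma loag_le_refl x : le x x.
Proof. by have [_ [_ [_ [_ [h _]]]]] := hG; apply: h. Qed.

Lemma loag_le_anti x y : le x y -> le y x -> x = y.
Proof. by have [_ [_ [_ [_ [_ [h _]]]]]] := hG; apply: h. Qed.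

Lemma loag_le_trans x y w : le x y -> le y w -> le x w.
Proof. by have [_ [_ [_ [_ [_ [_ [h _]]]]]]] := hG; apply: h. Qed.

Lemma loag_le_total x y : le x y \/ le y x.
Proof. by have [_ [_ [_ [_ [_ [_ [_ [h _]]]]]]]] := hG; apply: h. Qed.

Lemma loag_leD x y w : le x y -> le (add x w) (add y w).
Proof. by have [_ [_ [_ [_ [_ [_ [_ [_ h]]]]]]]] := hG; apply: h. Qed.

Lemma loag_addr0 x : add x z = x.
Proof. by rewrite loag_addC loag_add0. Qed.

Lemma loag_leD2 a b c d : le a b -> le c d -> le (add a c) (add b d).
Proof.
move=> hab hcd; apply: loag_le_trans (loag_leD c hab) _.
by rewrite !(loag_addC b); apply: loag_leD.
Qed.

Lemma loag_not_lt x y : ~ glt le x y -> le y x.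
Proof.
move=> nlt; case: (loag_le_total y x) => // lexy.
by have [->|neq] := EM (x = y); [apply: loag_le_refl | case: nlt].
Qed.

Local Notation mul := (nmul z add).

Lemma nmul1 x : mul 1 x = x.
Proof. exact: loag_addr0. Qed.

Lemma nmul_le n x y : le x y -> le (mul n x) (mul n y).
Proof. by move=> hxy; elim: n => [|n IH] /=; [apply: loag_le_refl | apply: loag_leD2]. Qed.

Lemma nmulD n m x : mul (n + m) x = add (mul n x) (mul m x).
Proof. by elim: n => [|n IH] /=; rewrite ?loag_add0 // IH loag_addA. Qed.

Lemma nmulM n m x : mul (n * m) x = mul n (mul m x).
Proof. by elim: n => [|n IH] //; rewrite mulSn nmulD IH. Qed.

Definition dominated (x y : G) : Prop := exists2 m, (1 <= m)%N & le x (mul m y).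

Lemma dominated_trans x y w : dominated x y -> dominated y w -> dominated x w.
Proof.
move=> [m m_gt0 hxy] [k k_gt0 hyw]; exists (m * k)%N; first by rewrite muln_gt0 m_gt0.
by rewrite nmulM; apply: loag_le_trans hxy (nmul_le m hyw).
Qed.

Lemma asymp_dominated x y : asymp z add le x y <-> dominated y x /\ dominated x y.
Proof.
split=> [[n [m [n_gt0 [m_gt0 [hyx hxy]]]]]|[[n n_gt0 hyx] [m m_gt0 hxy]]].
  by split; [exists n | exists m].
by exists n, m.
Qed.

Lemma asymp_refl x : asymp z add le x x.
Proof. by apply/asymp_dominated; split; exists 1%N; rewrite // nmul1; apply: loag_le_refl. Qed.

Lemma arc_rel_dominated x y : gpos z le y ->
  ((forall n, glt le (mul n x) y) \/ asymp z add le x y) <-> dominated x y.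
Proof.
move=> [y_ge0 y_ne0]; split=> [[small|/asymp_dominated []//]|dxy].
  by exists 1%N => //; have [+ _] := small 1%N; rewrite !nmul1.
have [small|/existsNP [[|n] /loag_not_lt ylen]] := EM (forall n, glt le (mul n x) y).
- by left.
- by case: y_ne0; apply: loag_le_anti.
- by right; apply/asymp_dominated; split=> //; exists n.+1.
Qed.

Lemma arc_mem_pos (a : Arc z add le) y : proj1_sig a y -> gpos z le y.
Proof. by case: a => A [x [_ eA]] /=; rewrite eA => -[]. Qed.

Definition arc_of x (x_pos : gpos z le x) : Arc z add le :=
  exist _ (fun y => gpos z le y /\ asymp z add le x y) (ex_intro _ x (conj x_pos erefl)).

Lemma arc_of_mem x (x_pos : gpos z le x) : proj1_sig (arc_of x_pos) x.
Proof. by split=> //; apply: asymp_refl. Qed.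

Lemma arc_of_asymp x y (x_pos : gpos z le x) (y_pos : gpos z le y) :
  arc_of x_pos = arc_of y_pos -> asymp z add le x y.
Proof.
move=> /(congr1 (fun c : Arc z add le => proj1_sig c y)) eq_xy.
by have := arc_of_mem y_pos; rewrite -eq_xy => -[].
Qed.

Lemma arc_exists_mem (a : Arc z add le) : exists x, proj1_sig a x.
Proof. by case: a => A [x [x_pos eA]]; exists x; rewrite /= eA; apply: arc_of_mem. Qed.

Lemma arc_mem_asymp (a : Arc z add le) y y' :
  proj1_sig a y -> proj1_sig a y' -> asymp z add le y y'.
Proof.
case: a => A [x [_ eA]] /=; rewrite eA.
move=> [_ /asymp_dominated [dyx dxy]] [_ /asymp_dominated [dy'x dxy']].
apply/asymp_dominated; split.
  exact: dominated_trans dy'x dxy.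
exact: dominated_trans dyx dxy'.
Qed.

Lemma arc_le_dominated (a b : Arc z add le) : arc_le a b <->
  exists x y, [/\ proj1_sig a x, proj1_sig b y & dominated x y].
Proof.
split=> [[x [y [ax [bY r]]]]|[x [y [ax bY d]]]]; exists x, y.
  by split=> //; apply/(arc_rel_dominated x (arc_mem_pos bY)).
by do 2!split=> //; apply/(arc_rel_dominated x (arc_mem_pos bY)).
Qed.

Lemma arc_le_trans (a b c : Arc z add le) : arc_le a b -> arc_le b c -> arc_le a c.
Proof.
move=> /arc_le_dominated [x [y [ax bY dxy]]] /arc_le_dominated [y' [w [bY' cw dy'w]]].
apply/arc_le_dominated; exists x, w; split=> //.
have /asymp_dominated [_ dyy'] := arc_mem_asymp bY bY'.
by apply: dominated_trans dxy (dominated_trans dyy' dy'w).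
Qed.

Lemma arc_le_total (a b : Arc z add le) : arc_le a b \/ arc_le b a.
Proof.
have [x ax] := arc_exists_mem a; have [y bY] := arc_exists_mem b.
have dom u v : le u v -> dominated u v by exists 1%N; rewrite ?nmul1.
by case: (loag_le_total x y) => /dom d; [left|right]; apply/arc_le_dominated;
  [exists x, y | exists y, x].
Qed.

Lemma arcperp_le_trans (a b c : ArcPerp z add le) :
  arcperp_le a b -> arcperp_le b c -> arcperp_le a c.
Proof. by case: a b c => [a|] [b|] [c|] //=; apply: arc_le_trans. Qed.

Lemma arcperp_le_total (a b : ArcPerp z add le) : arcperp_le a b \/ arcperp_le b a.
Proof. by case: a b => [a|] [b|] /=; [apply: arc_le_total | right | left | left]. Qed.

End LinearlyOrderedGroup.

Section DiscreteMetric.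
Variables (G : Type) (z : G) (add : G -> G -> G) (opp : G -> G) (le : G -> G -> Prop).
Hypothesis hG : is_loag z add opp le.
Variable p : G.
Hypothesis p_pos : gpos z le p.

Definition discrete_dist (X : Type) (x y : X) : G := if pselect (x = y) then z else p.

Lemma discrete_dist_eq (X : Type) (x : X) : discrete_dist x x = z.
Proof. by rewrite /discrete_dist; case: pselect. Qed.

Lemma discrete_dist_neq (X : Type) (x y : X) : x <> y -> discrete_dist x y = p.
Proof. by rewrite /discrete_dist; case: pselect. Qed.

Lemma discrete_dist_ge0 (X : Type) (x y : X) : le z (discrete_dist x y).
Proof.
have [<-|neq] := EM (x = y); first by rewrite discrete_dist_eq; apply: loag_le_refl hG _.
by rewrite discrete_dist_neq //; case: p_pos.
Qed.

Lemma discrete_dist_Gmetric (X : Type) : is_Gmetric z add le (@discrete_dist X).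
Proof.
have [_ p_neq0] := p_pos.
split; [|split; [exact: discrete_dist_ge0|split]].
- move=> x y; split=> [|<-]; last exact: discrete_dist_eq.
  by have [//|neq] := EM (x = y); rewrite discrete_dist_neq // => /esym /p_neq0.
- move=> x y; have [<-//|neq] := EM (x = y).
  by rewrite !discrete_dist_neq // => /esym.
- move=> x y w; have [<-|nxw] := EM (x = w).
    have := loag_leD2 hG (discrete_dist_ge0 x y) (discrete_dist_ge0 y x).
    by rewrite discrete_dist_eq (loag_add0 hG).
  rewrite (discrete_dist_neq nxw); have [<-|nxy] := EM (x = y).
    by rewrite discrete_dist_eq (loag_add0 hG) discrete_dist_neq //; apply: loag_le_refl hG _.
  have := loag_leD2 hG (loag_le_refl hG p) (discrete_dist_ge0 y w).
  by rewrite (discrete_dist_neq nxy) (loag_addr0 hG).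
Qed.

Lemma discrete_dist_in_Met (X : topologicalType) :
  (forall A : set X, open A) -> in_Met z add le (@discrete_dist X).
Proof.
move=> X_discrete; split; first exact: discrete_dist_Gmetric.
move=> U; split=> [_ x Ux|_]; last exact: X_discrete.
exists p; split=> // y [_ dxy_neqp]; have [<-//|neq] := EM (x = y).
by case: dxy_neqp; rewrite discrete_dist_neq.
Qed.

End DiscreteMetric.

Section LexicographicGroup.
Variables (I : Type) (ltI : I -> I -> Prop).
Hypothesis hW : is_wellorder ltI.
Local Open Scope ring_scope.

Definition lex_zero : I -> int := fun=> 0.
Definition lex_add (f g : I -> int) : I -> int := fun b => f b + g b.
Definition lex_opp (f : I -> int) : I -> int := fun b => - f b.
Definition lex_le (f g : I -> int) : Prop :=
  f = g \/ exists a, f a < g a /\ forall b, ltI b a -> f b = g b.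

Lemma lex_le_anti f g : lex_le f g -> lex_le g f -> f = g.
Proof.
move=> [//|[a [fga eqa]]] [//|[a' [gfa' eqa']]].
case: (wo_trichotomy hW a a') => [lt|[eq|lt]].
- by move: fga; rewrite (eqa' _ lt) ltxx.
- by subst a'; move: (lt_trans fga gfa'); rewrite ltxx.
- by move: gfa'; rewrite (eqa _ lt) ltxx.
Qed.

Lemma lex_le_trans f g h : lex_le f g -> lex_le g h -> lex_le f h.
Proof.
move=> [->//|[a [fga eqa]]] [<-|[a' [gha' eqa']]]; first by right; exists a.
right; case: (wo_trichotomy hW a a') => [lt|[eq|lt]].
- exists a; split; first by rewrite -(eqa' _ lt).
  by move=> b ba; have ba' := wo_trans hW ba lt; rewrite eqa // eqa'.
- subst a'; exists a; split; first exact: lt_trans fga gha'.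
  by move=> b ba; rewrite eqa // eqa'.
- exists a'; split; first by rewrite eqa.
  by move=> b ba'; have ba := wo_trans hW ba' lt; rewrite eqa // eqa'.
Qed.

(* The first index where [f] and [g] differ decides the comparison. *)
Lemma lex_le_total f g : lex_le f g \/ lex_le g f.
Proof.
have [->|neq] := EM (f = g); first by left; left.
have [b fgb] : exists b, f b <> g b.
  by apply/existsNP => eq_fg; apply/neq/funext.
have [a fga mina] := wo_least hW (Y := fun b => f b <> g b) fgb.
have eq_below c : ltI c a -> f c = g c by move=> ca; apply: contrapT; apply: mina.
case: (ltgtP (f a) (g a)) => [lt|lt|//].
- by left; right; exists a.
- by right; right; exists a; split=> // c /eq_below.
Qed.

Lemma lex_loag : is_loag lex_zero lex_add lex_opp lex_le.
Proof.
rewrite /lex_add; split; [|split; [|split; [|split; [|split; [|split; [|split; [|split]]]]]]].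
- by move=> f g h; apply: funext => b; rewrite addrA.
- by move=> f g; apply: funext => b; rewrite addrC.
- by move=> f; apply: funext => b; rewrite add0r.
- by move=> f; apply: funext => b; rewrite addNr.
- by move=> f; left.
- exact: lex_le_anti.
- exact: lex_le_trans.
- exact: lex_le_total.
- move=> f g h [->|[a [fga eqa]]]; first by left.
  by right; exists a; split=> [|b /eqa ->]; rewrite ?ltrD2r.
Qed.

Local Notation lex_pos := (gpos lex_zero lex_le).
Local Notation lex_mul := (nmul lex_zero lex_add).
Local Notation lex_asymp := (asymp lex_zero lex_add lex_le).
Local Notation lex_arc := (Arc lex_zero lex_add lex_le).
Local Notation lex_arcperp_le := (@arcperp_le _ lex_zero lex_add lex_le).

Definition leads (g : I -> int) (a : I) : Prop := 0 < g a /\ forall b, ltI b a -> g b = 0.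

Lemma lex_pos_leads g : lex_pos g -> exists a, leads g a.
Proof. by move=> [[//|[a [ga0 eqa]]] _]; exists a; split=> // b /eqa. Qed.

Lemma leads_lex_pos g a : leads g a -> lex_pos g.
Proof.
move=> [ga0 eqa]; split; first by right; exists a; split=> // b /eqa.
by move=> g0; move: ga0; rewrite -g0 ltxx.
Qed.

Lemma lex_le_leads u w a c : lex_le u w -> leads u a -> leads w c -> ~ ltI a c.
Proof.
move=> [<-|[d [uwd eqd]]] [ua0 u_below] [wc0 w_below] ac.
  by move: ua0; rewrite w_below ?ltxx.
case: (wo_trichotomy hW d a) => [da|[eq|ad]].
- by have dc := wo_trans hW da ac; move: uwd; rewrite u_below // w_below ?ltxx.
- by subst d; move: (lt_trans ua0 uwd); rewrite w_below ?ltxx.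
- by move: ua0; rewrite eqd // w_below ?ltxx.
Qed.

Lemma lex_nmulE n g : lex_mul n g = fun b => g b *+ n.
Proof.
elim: n => [|n IH] /=; first by apply: funext => b; rewrite mulr0n.
by rewrite IH; apply: funext => b; rewrite /lex_add mulrS.
Qed.

Lemma leads_nmul m g a : (1 <= m)%N -> leads g a -> leads (lex_mul m g) a.
Proof.
move=> m_gt0 [ga0 eqa]; rewrite lex_nmulE; split; first by rewrite pmulrn_lgt0.
by move=> b /eqa ->; rewrite mul0rn.
Qed.

Lemma asymp_leads x y a c : lex_asymp x y -> leads x a -> leads y c -> a = c.
Proof.
move=> [n [m [n_gt0 [m_gt0 [yx xy]]]]] xa yc.
have nca := lex_le_leads yx yc (leads_nmul n_gt0 xa).
have nac := lex_le_leads xy xa (leads_nmul m_gt0 yc).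
by case: (wo_trichotomy hW a c) => [|[|]].
Qed.

Definition unitv (a : I) : I -> int := fun b => if pselect (b = a) then 1 else 0.

Lemma unitv_eq a : unitv a a = 1.
Proof. by rewrite /unitv; case: pselect. Qed.

Lemma unitv_neq a b : b <> a -> unitv a b = 0.
Proof. by rewrite /unitv; case: pselect. Qed.

Lemma leads_unitv a : leads (unitv a) a.
Proof.
split=> [|b ba]; first by rewrite unitv_eq.
by apply: unitv_neq => ab; move: ba; rewrite ab => /(wo_irrefl hW).
Qed.

Lemma unitv_le a b : ltI a b -> lex_le (unitv b) (unitv a).
Proof.
move=> ab; right; exists a; split=> [|c ca].
  by rewrite unitv_eq unitv_neq // => ba; move: ab; rewrite ba => /(wo_irrefl hW).
by have cb := wo_trans hW ca ab; rewrite !(leads_unitv _).2.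
Qed.

Lemma unitv_le_double x a : leads x a -> lex_le (unitv a) (lex_mul 2 x).
Proof.
move=> [xa0 x_below]; right; exists a; rewrite lex_nmulE unitv_eq.
split=> [|b ba]; last by rewrite x_below // (leads_unitv _).2.
by rewrite mulr2n -[1]addr0 ler_ltD // -gtz0_ge1.
Qed.

Definition lex_class (a : I) : lex_arc := arc_of lex_add (leads_lex_pos (leads_unitv a)).

Lemma lex_class_mem a : proj1_sig (lex_class a) (unitv a).
Proof. exact: (arc_of_mem lex_loag (leads_lex_pos (leads_unitv a))). Qed.

Lemma lex_class_leads a y : proj1_sig (lex_class a) y -> leads y a.
Proof.
move=> [y_pos asy]; have [c yc] := lex_pos_leads y_pos.
by rewrite (asymp_leads asy (leads_unitv a) yc).
Qed.

Definition arc_leads (c : lex_arc) (b : I) : Prop := exists2 x, proj1_sig c x & leads x b.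

Lemma arc_leads_unique c b1 b2 : arc_leads c b1 -> arc_leads c b2 -> b1 = b2.
Proof.
move=> [x1 cx1 l1] [x2 cx2 l2].
exact: asymp_leads (arc_mem_asymp lex_loag cx1 cx2) l1 l2.
Qed.

Lemma lex_coinitial_family : coinitial_family lex_arcperp_le None ltI.
Proof.
exists (fun a => Some (lex_class a)); split=> //; split.
- move=> a b ab; split.
    apply/(arc_le_dominated lex_loag); exists (unitv b), (unitv a).
    split; [exact: lex_class_mem | exact: lex_class_mem |].
    by exists 1%N; rewrite // (nmul1 lex_loag); apply: unitv_le.
  move=> /Some_inj /(arc_of_asymp lex_loag) asy.
  by move: ab; rewrite (asymp_leads asy (leads_unitv b) (leads_unitv a)) => /(wo_irrefl hW).
- move=> [c|] // _; have [x cx] := arc_exists_mem lex_loag c.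
  have [a xa] := lex_pos_leads (arc_mem_pos cx).
  exists a; apply/(arc_le_dominated lex_loag); exists (unitv a), x.
  split=> //; first exact: lex_class_mem.
  by exists 2%N => //; apply: unitv_le_double.
Qed.

(* The leading indices of the classes of a coinitial family are cofinal. *)
Lemma lex_chi_min (J : Type) (ltJ : J -> J -> Prop) :
  full_cofinality ltI ->
  coinitial_family lex_arcperp_le None ltJ -> card_le I J.
Proof.
move=> I_reg [t [t_nbot [_ t_coin]]].
pose B b := exists j, exists2 c, t j = Some c & arc_leads c b.
have B_cof : cofinal ltI B.
  move=> a; have [j] := t_coin (Some (lex_class a)) ltac:(by []).
  case tj: (t j) => [c|]; last by case: (t_nbot j).
  move=> /(arc_le_dominated lex_loag) [x [y [cx ay [m m_gt0 xy]]]].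
  have [b xb] := lex_pos_leads (arc_mem_pos cx).
  exists b; first by exists j, c => //; exists x.
  exact: lex_le_leads xy xb (leads_nmul m_gt0 (lex_class_leads ay)).
have [g ginj] := I_reg B B_cof.
have [pick pickP] := choice (P := fun (b : {b | B b}) j =>
  exists2 c, t j = Some c & arc_leads c (proj1_sig b)) (fun b => proj2_sig b).
exists (fun i => pick (g i)) => i1 i2 eq_pick; apply/ginj/proj1_sig_inj.
have [c1 tc1 l1] := pickP (g i1); have [c2 tc2 l2] := pickP (g i2).
move: tc1; rewrite eq_pick tc2 => /Some_inj eq_c; subst c2.
exact: arc_leads_unique l1 l2.
Qed.

Lemma lex_chi : is_cardinal ltI -> inhabited I ->
  full_cofinality ltI ->
  chi_is lex_arcperp_le None ltI.
Proof.
move=> cI inhI I_reg; do 3!split=> //; first exact: lex_coinitial_family.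
by move=> J ltJ _ _; apply: lex_chi_min.
Qed.

End LexicographicGroup.

Lemma card_one_or_regular_cofinal (I : Type) (ltI : I -> I -> Prop) :
  card_is_one I \/ is_regular ltI ->
  inhabited I /\ full_cofinality ltI.
Proof.
case=> [[i0 one]|[_ [[f _] I_reg]]]; last by split; [constructor; apply: f 0%N|].
split=> [|A /(_ i0) [b Ab _]]; first by constructor.
by exists (fun=> exist _ b Ab) => i1 i2 _; rewrite (one i1) (one i2).
Qed.

Theorem proposition2p50 (X : topologicalType)
    (hX : forall A : set X, open A)
    (I : Type) (ltI : I -> I -> Prop) (hI : is_cardinal ltI) :
  in_MG X ltI <-> (card_is_one I \/ is_regular ltI).
Proof.
split=> [[G [z [add [opp [le [hG [chiG _]]]]]]]|/card_one_or_regular_cofinal [[i0] I_reg]].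
  exact: (chi_card_one_or_regular (arcperp_le_trans hG) (arcperp_le_total hG) hI.1 chiG).
have hW := hI.1.
exists (I -> int), (@lex_zero I), (@lex_add I), (@lex_opp I), (lex_le ltI).
split; first exact: lex_loag.
split; first exact: lex_chi.
have unitv_pos := leads_lex_pos (leads_unitv hW i0).
exact: ex_intro _ _ (discrete_dist_in_Met (lex_loag hW) unitv_pos hX).
Qed.
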